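(* Assume the setting in the context. Let $x_i, x_j, x_{k_1},\dots,x_{k_m}\in X$ be distinct and $K=\{x_{k_1},\dots,x_{k_m}\}$. Assume that (1) $(x_i,x_j)$ is a visible non-edge (w.r.t. $X$), and (2) for each $q$, $(x_i,x_j)$ is invisible with respect to $X\setminus\{x_{k_q}\}$. Then: (a) for every $q$: for all $M\subseteq X\setminus\{x_i,x_{k_q}\}$, $N\subseteq X\setminus\{x_j,x_{k_q}\}$ and $G_1,G_2\in\mathcal G$, $x_i-G_1(M)\not\perp\!\!\!\perp x_j-G_2(N)$; and (d) there exist $Q_1,Q_2\subseteq K$ with $Q_1\cup Q_2=K$, $G_1,G_2\in\mathcal G$ and $M,N\subseteq X\setminus(\{x_i,x_j\}\cup K)$ such that $x_i-G_1(M\cup Q_1)\perp\!\!\!\perp x_j-G_2(N\cup Q_2)$.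
   Context: Model: $X$ is a finite set of observed random variables and $U$ a finite set of unobserved random variables; $V=X\cup U$ and $G=(V,E)$ is a DAG on $V$. Each $v_i\in V$ satisfies $v_i=\sum_{x_j\in \mathrm{pa}(v_i)\cap X} f^{(i)}_j(x_j)+\sum_{u_k\in\mathrm{pa}(v_i)\cap U} f^{(i)}_k(u_k)+n_i$, where the $f$'s are nonlinear functions and the external noises $n_i$ are jointly independent. ''Parent'', ''ancestor'', ''path'', ''d-separation'' refer to $G$ (a path has distinct vertices). Causal Faithfulness Condition (CFC): any conditional independence among variables of $V$ that is not entailed by d-separation in $G$ does not hold. $\perp\!\!\!\perp$ denotes statistical independence, $\not\perp\!\!\!\perp$ dependence. Function class: $\mathcal G$ is a class of generalized additive functions: for $G\in\mathcal G$ and a set $M$ of observed variables, $G(M)=\sum_{x_m\in M} g_m(x_m)$ (with $G(\emptyset)=0$). It satisfies: for any $x_i,x_j\in X$, sets $M,N\subseteq X$, $G_1,G_2\in\mathcal G$ and external noise $n_k$, if $n_k\not\perp\!\!\!\perp x_i-G_1(M)$ and $n_k\not\perp\!\!\!\perp x_j-G_2(N)$ then $x_i-G_1(M)\not\perp\!\!\!\perp x_j-G_2(N)$. Definitions, for $X'\subseteq X$ and $x_i,x_j\in X'$: an unobserved causal path (UCP) from $x_i$ to $x_j$ w.r.t. $X'$ is a directed path $x_i\to\cdots\to v_k\to x_j$ in $G$ with $v_k\notin X'$; an unobserved backdoor path (UBP) between $x_i$ and $x_j$ w.r.t. $X'$ is a path $x_i\leftarrow v_k\leftarrow\cdots\leftarrow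 v\to\cdots\to v_l\to x_j$ with $v_k,v_l\notin X'$ (allowing $v=v_k$, $v=v_l$, or $v=v_k=v_l$; $v$ may be in $X'$). ''UBP/UCP between $x_i$ and $x_j$'' means a UBP or a UCP in either direction. $x_j$ is a visible parent of $x_i$ w.r.t. $X'$ if $x_j$ is a parent of $x_i$ and there is no UBP/UCP between them w.r.t. $X'$; $(x_i,x_j)$ is a visible non-edge w.r.t. $X'$ if there is no edge between them and no UBP/UCP between them w.r.t. $X'$; $(x_i,x_j)$ is invisible w.r.t. $X'$ if there is a UBP/UCP between them w.r.t. $X'$. When $X'$ is omitted, $X'=X$. Standing facts (taken as known), for $X'\subseteq X$ and distinct $x_i,x_j\in X'$: (F1) $x_j$ is a visible parent of $x_i$ w.r.t. $X'$ iff [for all $G_1,G_2\in\mathcal G$, $M\subseteq X'\setminus\{x_i,x_j\}$, $N\subseteq X'\setminus\{x_j\}$: $x_i-G_1(M)\not\perp\!\!\!\perp x_j-G_2(N)$] and [there exist $G_1,G_2\in\mathcal G$, $M\subseteq X'\setminus\{x_i\}$, $N\subseteq X'\setminus\{x_i,x_j\}$ with $x_i-G_1(M)\perp\!\!\!\perp x_j-G_2(N)$]. (F2) $(x_i,x_j)$ is a visible non-edge w.r.t. $X'$ iff there exist $G_1,G_2\in\mathcal G$ and $M,N\subseteq X'\setminus\{x_i,x_j\}$ with $x_i-G_1(M)\perp\!\!\!\perp x_j-G_2(N)$. (F3) $(x_i,x_j)$ is invisible w.r.t. $X'$ iff for all $M\subseteq X'\setminus\{x_i\}$, $N\subseteq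 X'\setminus\{x_j\}$, $G_1,G_2\in\mathcal G$: $x_i-G_1(M)\not\perp\!\!\!\perp x_j-G_2(N)$. *)

From HB Require Import structures.
From mathcomp Require Import all_boot all_order all_algebra.
From mathcomp Require Import all_classical all_reals all_analysis.
Set Implicit Arguments. Unset Strict Implicit. Unset Printing Implicit Defensive.
Import Order.TTheory GRing.Theory Num.Theory.
Local Open Scope classical_set_scope.
Local Open Scope ring_scope.

(* (E u v means u -> v).                                              *)
Section Graph.
Variables (V : finType) (E : rel V).

Definition acyclic : Prop := forall u v, E u v -> ~~ connect E v u.

Definition UCP (X' : {set V}) (a b : V) : Prop :=
  exists (p : seq V) (vk : V),
    [/\ vk \notin X', path E a (rcons (rcons p vk) b)
      & uniq (a :: rcons (rcons p vk) b)].

(* unobserved backdoor path between a and b w.r.t. X' :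
   a <- vk <- ... <- v -> ... -> vl -> b, distinct vertices,
   vk, vl \notin X'  (v = vk and/or v = vl allowed, v may be in X').
   The left branch is v :: rcons p1 a (vk = last v p1), the right branch
   is v :: rcons q1 b (vl = last v q1). *)
Definition UBP (X' : {set V}) (a b : V) : Prop :=
  exists (v : V) (p1 q1 : seq V),
    [/\ path E v (rcons p1 a), path E v (rcons q1 b),
        last v p1 \notin X', last v q1 \notin X'
      & uniq (v :: rcons p1 a ++ rcons q1 b)].

Definition invisible (X' : {set V}) (a b : V) : Prop :=
  UBP X' a b \/ UBP X' b a \/ UCP X' a b \/ UCP X' b a.

Definition visible_parent (X' : {set V}) (xi xj : V) : Prop :=
  E xj xi /\ ~ invisible X' xi xj.

Definition visible_nonedge (X' : {set V}) (xi xj : V) : Prop :=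
  [/\ ~~ E xi xj, ~~ E xj xi & ~ invisible X' xi xj].

(* d-connection: an (undirected, distinct-vertex) path a :: s from a to b
   all of whose interior vertices w are active given Z:
   colliders have a descendant (or themselves) in Z, non-colliders are
   not in Z. *)
Definition adj (u v : V) : bool := E u v || E v u.

Definition dconnected (Z : {set V}) (a b : V) : Prop :=
  exists s : seq V,
    [/\ last a s = b, uniq (a :: s), path adj a s &
      forall i : nat, (0 < i < size s)%N ->
        let w := nth a (a :: s) i in
        let u := nth a (a :: s) i.-1 in
        let x := nth a (a :: s) i.+1 in
        (E u w && E x w -> exists2 z, z \in Z & connect E w z) /\
        (~~ (E u w && E x w) -> w \notin Z)].

Definition dsep (A B Z : {set V}) : Prop :=
  forall a b, a \in A -> b \in B -> ~ dconnected Z a b.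

End Graph.

Section Prob.
Variables (d : measure_display) (T : measurableType d) (R : realType).
Variable (P : probability T R).

Definition indep (Y Z : T -> R) : Prop :=
  forall A B : set R, measurable A -> measurable B ->
    P (Y @^-1` A `&` Z @^-1` B) = (P (Y @^-1` A) * P (Z @^-1` B))%E.

Definition mutually_indep (V : finType) (n : V -> T -> R) : Prop :=
  forall (S : {set V}) (B : V -> set R), (forall v, measurable (B v)) ->
    P [set t | forall v, v \in S -> B v (n v t)] =
    (\prod_(v in S) P (n v @^-1` B v))%E.

Definition sigma_of (V : finType) (var : V -> T -> R) (S : {set V})
  : set (set T) :=
  <<s [set Y | exists v, v \in S /\
               exists Bo : set R, measurable Bo /\ Y = var v @^-1` Bo] >>.

Definition measurable_wrt (F : set (set T)) (phi : T -> R) : Prop :=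
  forall Bo : set R, measurable Bo -> F (phi @^-1` Bo).

(* conditional independence of the variables in A and those in B given
   those in C: for all events SA in sigma(A), SB in sigma(B) there are
   versions phiA, phiB of P(SA | sigma(C)), P(SB | sigma(C)) with
   P(SA /\ SB | sigma(C)) = phiA * phiB a.s. (all characterised by their
   integrals over the events of sigma(C)). *)
Definition cond_indep (V : finType) (var : V -> T -> R) (A B C : {set V})
  : Prop :=
  forall SA SB, sigma_of var A SA -> sigma_of var B SB ->
    exists phiA phiB : T -> R,
      [/\ measurable_wrt (sigma_of var C) phiA,
          measurable_wrt (sigma_of var C) phiB &
          forall W, sigma_of var C W ->
            [/\ P (SA `&` W) = (\int[P]_(t in W) (phiA t)%:E)%E,
                P (SB `&` W) = (\int[P]_(t in W) (phiB t)%:E)%E &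
                P (SA `&` SB `&` W) =
                  (\int[P]_(t in W) (phiA t * phiB t)%:E)%E]].

End Prob.

(* Generalized additive functions: an element of the class is a family *)
(* g of component functions g m : R -> R; G(M) = sum_{m in M} g m (x_m) *)
Definition Gapp (T : Type) (R : realType) (V : finType) (var : V -> T -> R)
  (g : V -> R -> R) (M : {set V}) : T -> R :=
  fun t => \sum_(m in M) g m (var m t).

Definition resid (T : Type) (R : realType) (V : finType) (var : V -> T -> R)
  (i : V) (g : V -> R -> R) (M : {set V}) : T -> R :=
  fun t => var i t - Gapp var g M t.

From HB Require Import structures.
From mathcomp Require Import all_boot all_order all_algebra.
From mathcomp Require Import all_classical all_reals all_analysis.
Import Order.TTheory GRing.Theory Num.Theory.
Local Open Scope classical_set_scope.
Local Open Scope ring_scope.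

(* By F3, invisibility of (x_i, x_j) w.r.t. X \ {k} says exactly that no
   residual pair avoiding k is independent; this is (a).  By F2, the visible
   non-edge yields an independent residual pair with regressor sets M0, N0.
   Each k in K must then lie in M0 or in N0, otherwise (a) is contradicted,
   so K splits as (M0 ∩ K) ∪ (N0 ∩ K) and M0 \ K, N0 \ K avoid K. *)

Section FinsetFacts.
Variable T : finType.
Implicit Types (A B K X : {set T}) (a b k : T).

Lemma setD_pair X a b : X :\: [set a; b] = X :\ b :\ a.
Proof. by rewrite finset.setDDl finset.setUC. Qed.

Lemma subsetD_pair A X a k : A \subset X :\ a -> k \notin A ->
  A \subset X :\: [set a; k].
Proof. by move=> sAX kA; rewrite -finset.setDDl subsetD1 sAX. Qed.

Lemma setDIK A K : A :\: K :|: A :&: K = A.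
Proof. by rewrite finset.setUC finset.setID. Qed.

Lemma setI_cover A B K : K \subset A :|: B -> A :&: K :|: B :&: K = K.
Proof. by rewrite -finset.setIUl => /finset.setIidPr. Qed.

End FinsetFacts.

Section ResidualPairs.
Context {d : measure_display} {T : measurableType d} {R : realType}.
Context {P : probability T R} {V : finType} {var : V -> T -> R}.
Context {GC : set (V -> R -> R)} {X : {set V}} {xi xj : V}.

Lemma dependent_avoiding {k : V} :
  (forall g1 g2 (M N : {set V}), GC g1 -> GC g2 ->
     M \subset X :\ k :\ xi -> N \subset X :\ k :\ xj ->
     ~ indep P (resid var xi g1 M) (resid var xj g2 N)) ->
  forall (M N : {set V}) g1 g2,
    M \subset X :\: [set xi; k] -> N \subset X :\: [set xj; k] ->
    GC g1 -> GC g2 ->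
    ~ indep P (resid var xi g1 M) (resid var xj g2 N).
Proof. by move=> dep M N g1 g2; rewrite !setD_pair => sM sN G1 G2; apply: dep. Qed.

Lemma independent_regressors_cover {K M N : {set V}} {g1 g2} :
  (forall k, k \in K ->
     forall (M N : {set V}) g1 g2,
       M \subset X :\: [set xi; k] -> N \subset X :\: [set xj; k] ->
       GC g1 -> GC g2 ->
       ~ indep P (resid var xi g1 M) (resid var xj g2 N)) ->
  GC g1 -> GC g2 ->
  M \subset X :\: [set xi; xj] -> N \subset X :\: [set xi; xj] ->
  indep P (resid var xi g1 M) (resid var xj g2 N) ->
  K \subset M :|: N.
Proof.
move=> dep G1 G2 sM sN indMN; apply/fintype.subsetP => k kK.
rewrite inE; apply/negPn/negP; rewrite negb_or => /andP[kM kN].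
apply: (dep k kK M N g1 g2 _ _ G1 G2 indMN).
- apply: subsetD_pair kM; apply: fintype.subset_trans sM _.
  by apply: finset.setDS; rewrite finset.sub1set set21.
- apply: subsetD_pair kN; apply: fintype.subset_trans sN _.
  by apply: finset.setDS; rewrite finset.sub1set set22.
Qed.

End ResidualPairs.

Theorem lemma7
  (d : measure_display) (T : measurableType d) (R : realType)
  (P : probability T R)
  (V : finType) (X : {set V}) (E : rel V)
  (var : V -> T -> R) (f : V -> V -> R -> R) (noise : V -> T -> R)
  (GC : set (V -> R -> R))
  (xi xj : V) (K : {set V})
  (HDAG : acyclic E)
  (HSEM : forall i t,
     var i t = \sum_(j in V | E j i) f i j (var j t) + noise i t)
  (Hf_meas : forall i j, measurable_fun setT (f i j))
  (Hf_nonlin : forall i j, E j i ->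
     ~ (exists a b : R, forall x, f i j x = a * x + b))
  (Hn_meas : forall i, measurable_fun setT (noise i))
  (Hn_indep : mutually_indep P noise)
  (HCFC : forall A B C : {set V},
     [disjoint A & B]%B -> [disjoint A & C]%B -> [disjoint B & C]%B ->
     cond_indep P var A B C -> dsep E A B C)
  (HGC_meas : forall g, GC g -> forall m, measurable_fun setT (g m))
  (HGC : forall (i j : V) (M N : {set V}) (g1 g2 : V -> R -> R) (k : V),
     i \in X -> j \in X -> M \subset X -> N \subset X -> GC g1 -> GC g2 ->
     ~ indep P (noise k) (resid var i g1 M) ->
     ~ indep P (noise k) (resid var j g2 N) ->
     ~ indep P (resid var i g1 M) (resid var j g2 N))
  (F1 : forall (X' : {set V}) (a b : V), X' \subset X ->
     a \in X' -> b \in X' -> a != b ->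
     (visible_parent E X' a b <->
       ((forall g1 g2 (M N : {set V}), GC g1 -> GC g2 ->
          M \subset X' :\: [set a; b] -> N \subset X' :\ b ->
          ~ indep P (resid var a g1 M) (resid var b g2 N)) /\
        (exists g1 g2 (M N : {set V}), [/\ GC g1, GC g2,
          M \subset X' :\ a, N \subset X' :\: [set a; b] &
          indep P (resid var a g1 M) (resid var b g2 N)]))))
  (F2 : forall (X' : {set V}) (a b : V), X' \subset X ->
     a \in X' -> b \in X' -> a != b ->
     (visible_nonedge E X' a b <->
       (exists g1 g2 (M N : {set V}), [/\ GC g1, GC g2,
          M \subset X' :\: [set a; b], N \subset X' :\: [set a; b] &
          indep P (resid var a g1 M) (resid var b g2 N)])))
  (F3 : forall (X' : {set V}) (a b : V), X' \subset X ->
     a \in X' -> b \in X' -> a != b ->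
     (invisible E X' a b <->
       (forall g1 g2 (M N : {set V}), GC g1 -> GC g2 ->
          M \subset X' :\ a -> N \subset X' :\ b ->
          ~ indep P (resid var a g1 M) (resid var b g2 N))))
  (Hxi : xi \in X) (Hxj : xj \in X) (Hij : xi != xj)
  (HK : K \subset X) (HKij : xi \notin K /\ xj \notin K)
  (H1 : visible_nonedge E X xi xj)
  (H2 : forall k, k \in K -> invisible E (X :\ k) xi xj) :
  (forall k, k \in K ->
     forall (M N : {set V}) g1 g2,
       M \subset X :\: [set xi; k] -> N \subset X :\: [set xj; k] ->
       GC g1 -> GC g2 ->
       ~ indep P (resid var xi g1 M) (resid var xj g2 N)) /\
  (exists (Q1 Q2 : {set V}) (g1 g2 : V -> R -> R) (M N : {set V}),
     [/\ Q1 \subset K, Q2 \subset K, Q1 :|: Q2 = K & GC g1 /\ GC g2] /\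
     [/\ M \subset X :\: ([set xi; xj] :|: K),
         N \subset X :\: ([set xi; xj] :|: K) &
         indep P (resid var xi g1 (M :|: Q1)) (resid var xj g2 (N :|: Q2))]).
Proof.
have in_setD1K a k : a \in X -> a \notin K -> k \in K -> a \in X :\ k.
  by move=> aX aK kK; rewrite in_setD1 aX andbT; apply: contraNneq aK => ->.
have [xiK xjK] := HKij.
have dep_a k (kK : k \in K) := dependent_avoiding
  ((F3 _ _ _ (subD1set X k) (in_setD1K _ _ Hxi xiK kK)
     (in_setD1K _ _ Hxj xjK kK) Hij).1 (H2 k kK)).
split=> //.
have [g1 [g2 [M0 [N0 [G1 G2 sM0 sN0 indMN]]]]] :=
  (F2 X xi xj (fintype.subxx X) Hxi Hxj Hij).1 H1.
have coverK := independent_regressors_cover dep_a G1 G2 sM0 sN0 indMN.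
exists (M0 :&: K), (N0 :&: K), g1, g2, (M0 :\: K), (N0 :\: K).
rewrite !setDIK setI_cover // !finset.subsetIr -finset.setDDl !finset.setSD //.
Qed.
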